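(* Let $G\subset\mathrm{Homeo}_+([0,1])$ be a group without linked fixed points, and let $I^\infty(G)=\bigcup_{n\ge0}I^n(G)$ where $I^0(G)=G$ and $I^{n+1}(G)=I(I^n(G))$. Then $I^\infty(G)$ is a complete group without linked fixed points, and moreover: (1) the orbits of $I^\infty(G)$ and of $G$ on $[0,1]$ coincide; (2) every pair of successive fixed points of $I^\infty(G)$ is a pair of successive fixed points of $G$; (3) for every pair $\{a,b\}$ of successive fixed points of some $f\in G$ and every relative translation number $\tau$ of $I^\infty(G)$ at $\{a,b\}$, one has $\tau(G_{[a,b]})=\tau(I^\infty(G)_{[a,b]})$; (4) every complete group without linked fixed points containing $G$ contains $I^\infty(G)$.
   Context: For a group $G$ of homeomorphisms of $[0,1]$, a pair of successive fixed points of $G$ is a pair $\{a,b\}$, $a<b$, such that $(a,b)$ is a connected component of $[0,1]\setminus \mathrm{Fix}(g)$ for some $g\in G$; two pairs $\{a,b\},\{c,d\}$ are linked if $(a,b)\cap\{c,d\}$ or $(c,d)\cap\{a,b\}$ consists of exactly one point; $G$ is without linked fixed points if no two such pairs are linked. A homeomorphism $h\in\mathrm{Homeo}_+([0,1])$ is induced by $g\in\mathrm{Homeo}_+([0,1])$ if $h(x)\in\{x,g(x)\}$ for every $x\in[0,1]$ (equivalently $h$ equals $g$ on a union of connected components of $[0,1]\setminus\mathrm{Fix}(g)$ and the identity elsewhere). For a group $G$, $I(G)$ denotes the group generated by all homeomorphisms induced by elements of $G$. A group without linked fixed points is complete if it contains every homeomorphism induced by any of its elements. For a group $H$ without linked fixed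 points and a pair $\{a,b\}$ of successive fixed points, $H_{[a,b]}$ is the stabilizer of $[a,b]$ in $H$, and a relative translation number at $\{a,b\}$ is a group morphism $\tau:H_{[a,b]}\to\mathbb R$ whose kernel is the set of elements having a fixed point in $(a,b)$ and with $\tau(g)>0$ iff $g(x)>x$ on $(a,b)$ (such a morphism exists and is unique up to a positive factor). *)

From Stdlib Require Import Reals.
Open Scope R_scope.

(* Elements of Homeo_+([0,1]) are represented by functions R -> R that are
   increasing bijections of [0,1] and equal to the identity outside [0,1]
   (so that extensional equality of maps of [0,1] is equality of functions). *)
Definition homeo_plus (f : R -> R) : Prop :=
  (forall x y, 0 <= x -> x < y -> y <= 1 -> f x < f y) /\
  (forall x, 0 <= x <= 1 -> 0 <= f x <= 1) /\
  (forall y, 0 <= y <= 1 -> exists x, 0 <= x <= 1 /\ f x = y) /\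
  (forall x, (x < 0 \/ 1 < x) -> f x = x).

Definition comp (g h : R -> R) : R -> R := fun x => g (h x).

Definition is_group (G : (R -> R) -> Prop) : Prop :=
  (forall g, G g -> homeo_plus g) /\
  G (fun x => x) /\
  (forall g h, G g -> G h -> G (comp g h)) /\
  (forall g, G g -> exists g', G g' /\ forall x, g' (g x) = x /\ g (g' x) = x).

Definition succ_fix (g : R -> R) (a b : R) : Prop :=
  0 <= a /\ a < b /\ b <= 1 /\ g a = a /\ g b = b /\
  (forall x, a < x < b -> g x <> x).

Definition sfp (G : (R -> R) -> Prop) (a b : R) : Prop :=
  exists g, G g /\ succ_fix g a b.

Definition in_open (a b x : R) : Prop := a < x /\ x < b.

Definition exactly_one (a b c d : R) : Prop :=
  (in_open a b c /\ ~ in_open a b d) \/ (~ in_open a b c /\ in_open a b d).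

Definition linked (a b c d : R) : Prop :=
  exactly_one a b c d \/ exactly_one c d a b.

Definition without_linked (G : (R -> R) -> Prop) : Prop :=
  forall a b c d, sfp G a b -> sfp G c d -> ~ linked a b c d.

Definition induced (g h : R -> R) : Prop :=
  homeo_plus h /\ forall x, 0 <= x <= 1 -> h x = x \/ h x = g x.

Definition generated (S : (R -> R) -> Prop) (f : R -> R) : Prop :=
  forall H, is_group H -> (forall s, S s -> H s) -> H f.

Definition I_op (G : (R -> R) -> Prop) : (R -> R) -> Prop :=
  generated (fun h => exists g, G g /\ induced g h).

Fixpoint I_iter (n : nat) (G : (R -> R) -> Prop) : (R -> R) -> Prop :=
  match n with
  | O => G
  | S m => I_op (I_iter m G)
  end.

Definition I_inf (G : (R -> R) -> Prop) (f : R -> R) : Prop :=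
  exists n, I_iter n G f.

Definition complete (H : (R -> R) -> Prop) : Prop :=
  is_group H /\ without_linked H /\
  (forall g h, H g -> induced g h -> H h).

Definition stab_int (a b : R) (g : R -> R) : Prop :=
  forall y, a <= y <= b <-> exists x, a <= x <= b /\ g x = y.

Definition rel_transl (H : (R -> R) -> Prop) (a b : R) (tau : (R -> R) -> R) : Prop :=
  (forall g h, H g -> stab_int a b g -> H h -> stab_int a b h ->
     tau (comp g h) = tau g + tau h) /\
  (forall g, H g -> stab_int a b g ->
     (tau g = 0 <-> exists x, a < x < b /\ g x = x)) /\
  (forall g, H g -> stab_int a b g ->
     (tau g > 0 <-> forall x, a < x < b -> g x > x)).

(* We single out the "tame" homeomorphisms f, which look like elements of G
   at every scale:
   - at every point x, f x = g x for some g in G;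
   - every interval contains a subinterval on which f coincides with some
     element of G;
   - near every pair {c,d} of successive fixed points of G, f agrees at c, x,
     d with some g in G, and on [c,d] it is locally g composed with elements
     of the kernel K(c,d) of the relative translation number at {c,d} (the
     elements of G fixing c and d and some point of (c,d)).
   Tame maps are closed under composition, every pair of successive fixed
   points of a tame map is one of G, and maps induced by tame maps are tame.
   Hence tame maps with tame inverses form a group containing G and closed
   under induction, so it contains every I^n(G); all five assertions of the
   theorem then follow from the three defining properties of tameness. *)

From Stdlib Require Import Reals Lra Classical ClassicalEpsilon FunctionalExtensionality.
Open Scope R_scope.

Lemma homeo_mono f : homeo_plus f -> forall x y, 0 <= x -> x < y -> y <= 1 -> f x < f y.
Proof. intros [H _]; exact H. Qed.
Lemma homeo_range f : homeo_plus f -> forall x, 0 <= x <= 1 -> 0 <= f x <= 1.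
Proof. intros [_ [H _]]; exact H. Qed.
Lemma homeo_onto f : homeo_plus f -> forall y, 0 <= y <= 1 -> exists x, 0 <= x <= 1 /\ f x = y.
Proof. intros [_ [_ [H _]]]; exact H. Qed.
Lemma homeo_outside f : homeo_plus f -> forall x, (x < 0 \/ 1 < x) -> f x = x.
Proof. intros [_ [_ [_ H]]]; exact H. Qed.

Lemma homeo_le f (Hf : homeo_plus f) x y : 0 <= x -> x <= y -> y <= 1 -> f x <= f y.
Proof.
  intros H1 H2 H3. destruct (Rle_lt_or_eq_dec _ _ H2) as [h|h].
  - left; apply (homeo_mono f Hf); auto.
  - subst; lra.
Qed.

Lemma homeo_lt_rev f (Hf : homeo_plus f) x y :
  0 <= x <= 1 -> 0 <= y <= 1 -> f x < f y -> x < y.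
Proof.
  intros Hx Hy H. destruct (Rlt_le_dec x y) as [h|h]; auto.
  pose proof (homeo_le f Hf y x ltac:(lra) h ltac:(lra)). lra.
Qed.

Lemma homeo_le_rev f (Hf : homeo_plus f) x y :
  0 <= x <= 1 -> 0 <= y <= 1 -> f x <= f y -> x <= y.
Proof.
  intros Hx Hy H. destruct (Rle_lt_dec x y) as [h|h]; auto.
  pose proof (homeo_mono f Hf y x ltac:(lra) h ltac:(lra)). lra.
Qed.

Lemma homeo_fix0 f : homeo_plus f -> f 0 = 0.
Proof.
  intros Hf. destruct (homeo_onto f Hf 0 ltac:(lra)) as [x [Hx Ex]].
  destruct (Rle_lt_or_eq_dec 0 x ltac:(lra)) as [h|h]; [|subst; auto].
  pose proof (homeo_mono f Hf 0 x ltac:(lra) h ltac:(lra)).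
  pose proof (homeo_range f Hf 0 ltac:(lra)). lra.
Qed.

Lemma homeo_fix1 f : homeo_plus f -> f 1 = 1.
Proof.
  intros Hf. destruct (homeo_onto f Hf 1 ltac:(lra)) as [x [Hx Ex]].
  destruct (Rle_lt_or_eq_dec x 1 ltac:(lra)) as [h|h]; [|subst; auto].
  pose proof (homeo_mono f Hf x 1 ltac:(lra) h ltac:(lra)).
  pose proof (homeo_range f Hf 1 ltac:(lra)). lra.
Qed.

Lemma homeo_inj f (Hf : homeo_plus f) x y : f x = f y -> x = y.
Proof.
  intros E.
  destruct (Rle_dec 0 x); destruct (Rle_dec x 1); destruct (Rle_dec 0 y); destruct (Rle_dec y 1).
  all: try (rewrite (homeo_outside f Hf x) in E by lra).
  all: try (rewrite (homeo_outside f Hf y) in E by lra).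
  all: try lra.
  all: try (pose proof (homeo_range f Hf x ltac:(lra)); lra).
  all: try (pose proof (homeo_range f Hf y ltac:(lra)); lra).
  apply Rle_antisym; apply (homeo_le_rev f Hf); lra.
Qed.

Lemma homeo_comp g h : homeo_plus g -> homeo_plus h -> homeo_plus (comp g h).
Proof.
  intros Hg Hh; unfold comp; split; [|split; [|split]].
  - intros x y H1 H2 H3. apply (homeo_mono g Hg).
    + apply (homeo_range h Hh); lra.
    + apply (homeo_mono h Hh); lra.
    + apply (homeo_range h Hh); lra.
  - intros x Hx. apply (homeo_range g Hg). apply (homeo_range h Hh); lra.
  - intros y Hy. destruct (homeo_onto g Hg y Hy) as [x1 [H1 E1]].
    destruct (homeo_onto h Hh x1 H1) as [x [H2 E2]].
    exists x; split; auto. rewrite E2; auto.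
  - intros x Hx. rewrite (homeo_outside h Hh x Hx). apply (homeo_outside g Hg x Hx).
Qed.

Definition inverse (f f' : R -> R) : Prop := forall x, f' (f x) = x /\ f (f' x) = x.

Lemma inverse_sym f f' : inverse f f' -> inverse f' f.
Proof. intros H x; split; apply H. Qed.

Lemma inverse_comp f f' g g' : inverse f f' -> inverse g g' -> inverse (comp f g) (comp g' f').
Proof.
  intros If Ig x; unfold comp.
  rewrite (proj1 (If (g x))), (proj1 (Ig x)), (proj2 (Ig (f' x))), (proj2 (If x)). auto.
Qed.

Lemma homeo_inverse f f' : homeo_plus f -> inverse f f' -> homeo_plus f'.
Proof.
  intros Hf Hi.
  assert (Hout : forall x, (x < 0 \/ 1 < x) -> f' x = x).
  { intros x Hx. destruct (Rle_dec 0 (f' x)); destruct (Rle_dec (f' x) 1).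
    - pose proof (homeo_range f Hf (f' x) ltac:(lra)). rewrite (proj2 (Hi x)) in H. lra.
    - pose proof (proj2 (Hi x)). rewrite (homeo_outside f Hf) in H by lra. auto.
    - pose proof (proj2 (Hi x)). rewrite (homeo_outside f Hf) in H by lra. auto.
    - pose proof (proj2 (Hi x)). rewrite (homeo_outside f Hf) in H by lra. auto. }
  assert (Hr : forall y, 0 <= y <= 1 -> 0 <= f' y <= 1).
  { intros y Hy. destruct (Rle_dec 0 (f' y)); destruct (Rle_dec (f' y) 1); try lra.
    all: rewrite <- (proj2 (Hi y)) in Hy; rewrite (homeo_outside f Hf) in Hy; lra. }
  split; [|split; [|split]]; auto.
  - intros x y H1 H2 H3.
    apply (homeo_lt_rev f Hf); try (apply Hr; lra).
    rewrite (proj2 (Hi x)), (proj2 (Hi y)); auto.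
  - intros y Hy. exists (f y); split; [apply (homeo_range f Hf); auto | apply Hi].
Qed.

Lemma homeo_has_inverse f : homeo_plus f -> exists f', inverse f f'.
Proof.
  intros Hf.
  assert (Hs : forall y, exists x, f x = y).
  { intros y. destruct (Rle_dec 0 y); destruct (Rle_dec y 1).
    - destruct (homeo_onto f Hf y ltac:(lra)) as [x [_ E]]; eauto.
    - exists y; apply (homeo_outside f Hf); lra.
    - exists y; apply (homeo_outside f Hf); lra.
    - exists y; apply (homeo_outside f Hf); lra. }
  exists (fun y => proj1_sig (constructive_indefinite_description _ (Hs y))).
  intros x; split.
  - destruct (constructive_indefinite_description _ (Hs (f x))) as [z Hz]; simpl.
    apply (homeo_inj f Hf); auto.
  - destruct (constructive_indefinite_description _ (Hs x)) as [z Hz]; simpl; auto.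
Qed.

Lemma homeo_cont_right f (Hf : homeo_plus f) x : 0 <= x <= 1 -> forall e, e > 0 ->
  exists d, d > 0 /\ forall y, x <= y <= 1 -> y < x + d -> f y < f x + e.
Proof.
  intros Hx e He. destruct (Rlt_le_dec x 1) as [h|h].
  - pose proof (homeo_mono f Hf x 1 ltac:(lra) h ltac:(lra)) as H1.
    rewrite (homeo_fix1 f Hf) in H1.
    pose proof (homeo_range f Hf x Hx).
    set (t := Rmin (f x + e/2) 1).
    assert (Ht1 : f x < t) by (unfold t; apply Rmin_case; lra).
    assert (Ht2 : t <= f x + e/2) by apply Rmin_l.
    assert (Ht3 : t <= 1) by apply Rmin_r.
    destruct (homeo_onto f Hf t ltac:(lra)) as [xr [Hxr Er]].
    assert (x < xr) by (apply (homeo_lt_rev f Hf); auto; lra).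
    exists (xr - x); split; [lra|]. intros y Hy Hy2.
    pose proof (homeo_mono f Hf y xr ltac:(lra) ltac:(lra) ltac:(lra)). lra.
  - exists 1; split; [lra|]. intros y Hy _. assert (y = x) by lra. subst; lra.
Qed.

Lemma homeo_cont_left f (Hf : homeo_plus f) x : 0 <= x <= 1 -> forall e, e > 0 ->
  exists d, d > 0 /\ forall y, 0 <= y <= x -> x - d < y -> f x - e < f y.
Proof.
  intros Hx e He. destruct (Rlt_le_dec 0 x) as [h|h].
  - pose proof (homeo_mono f Hf 0 x ltac:(lra) h ltac:(lra)) as H1.
    rewrite (homeo_fix0 f Hf) in H1.
    pose proof (homeo_range f Hf x Hx).
    set (t := Rmax (f x - e/2) 0).
    assert (Ht1 : t < f x) by (unfold t; apply Rmax_case; lra).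
    assert (Ht2 : f x - e/2 <= t) by apply Rmax_l.
    assert (Ht3 : 0 <= t) by apply Rmax_r.
    destruct (homeo_onto f Hf t ltac:(lra)) as [xl [Hxl El]].
    assert (xl < x) by (apply (homeo_lt_rev f Hf); auto; lra).
    exists (x - xl); split; [lra|]. intros y Hy Hy2.
    pose proof (homeo_mono f Hf xl y ltac:(lra) ltac:(lra) ltac:(lra)). lra.
  - exists 1; split; [lra|]. intros y Hy _. assert (y = x) by lra. subst; lra.
Qed.

(* The last fixed point to the left of x: the supremum of the fixed points
   in [0,x], which is fixed by continuity. *)
Lemma last_fixed_left f (Hf : homeo_plus f) x : 0 <= x <= 1 ->
  exists a, 0 <= a <= x /\ f a = a /\ forall y, a < y <= x -> f y <> y.
Proof.
  intros Hx.
  set (E := fun y => 0 <= y <= x /\ f y = y).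
  assert (Hb : bound E) by (exists x; intros y [Hy _]; lra).
  assert (Hne : exists y, E y) by (exists 0; split; [lra | apply (homeo_fix0 f Hf)]).
  destruct (completeness E Hb Hne) as [a [Hub Hlub]].
  assert (Ha0 : 0 <= a) by (apply Hub; split; [lra | apply (homeo_fix0 f Hf)]).
  assert (Hax : a <= x) by (apply Hlub; intros y [Hy _]; lra).
  assert (Hfa : f a = a).
  { destruct (Rtotal_order (f a) a) as [h|[h|h]]; auto; exfalso.
    - destruct (classic (exists y, E y /\ f a < y)) as [[y [[Hy1 Hy2] Hy3]]|N].
      + assert (y <= a) by (apply Hub; split; auto).
        pose proof (homeo_le f Hf y a ltac:(lra) ltac:(lra) ltac:(lra)). lra.
      + assert (a <= f a); [|lra]. apply Hlub. intros y Hy.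
        destruct (Rle_dec y (f a)); auto. exfalso; apply N; exists y; split; auto; lra.
    - destruct (homeo_cont_left f Hf a ltac:(lra) (f a - a) ltac:(lra)) as [d [Hd Hc]].
      destruct (classic (exists y, E y /\ a - d < y)) as [[y [[Hy1 Hy2] Hy3]]|N].
      + assert (y <= a) by (apply Hub; split; auto).
        pose proof (Hc y ltac:(lra) Hy3). lra.
      + assert (a <= a - d); [|lra]. apply Hlub. intros y Hy.
        destruct (Rle_dec y (a - d)); auto. exfalso; apply N; exists y; split; auto; lra. }
  exists a; repeat split; auto. intros y Hy Hfy.
  assert (y <= a) by (apply Hub; split; auto; lra). lra.
Qed.

(* Symmetrically, the first fixed point to the right of x (an infimum). *)
Lemma first_fixed_right f (Hf : homeo_plus f) x : 0 <= x <= 1 ->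
  exists b, x <= b <= 1 /\ f b = b /\ forall y, x <= y < b -> f y <> y.
Proof.
  intros Hx.
  set (E := fun z => x <= - z <= 1 /\ f (- z) = - z).
  assert (Hb : bound E) by (exists (- x); intros y [Hy _]; lra).
  assert (Hne : exists y, E y).
  { exists (Ropp 1); unfold E; rewrite Ropp_involutive; split; [lra | apply (homeo_fix1 f Hf)]. }
  destruct (completeness E Hb Hne) as [m [Hub Hlub]].
  set (b := - m).
  assert (HE : forall y, x <= y <= 1 -> f y = y -> b <= y).
  { intros y Hy Hfy. unfold b. assert (- y <= m); [|lra].
    apply Hub. unfold E; rewrite Ropp_involutive; split; auto. }
  assert (Hb1 : b <= 1) by (apply HE; [lra | apply (homeo_fix1 f Hf)]).
  assert (Hbx : x <= b).
  { unfold b. assert (m <= - x); [apply Hlub; intros y [Hy _]; lra | lra]. }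
  assert (Hfb : f b = b).
  { destruct (Rtotal_order (f b) b) as [h|[h|h]]; auto; exfalso.
    - destruct (homeo_cont_right f Hf b ltac:(lra) (b - f b) ltac:(lra)) as [d [Hd Hc]].
      destruct (classic (exists y, x <= y <= 1 /\ f y = y /\ y < b + d))
        as [[y [Hy1 [Hy2 Hy3]]]|N].
      + pose proof (HE y Hy1 Hy2). pose proof (Hc y ltac:(lra) Hy3). lra.
      + assert (m <= - (b + d)); [|unfold b in *; lra]. apply Hlub. intros z [Hz1 Hz2].
        destruct (Rle_dec z (- (b + d))); auto.
        exfalso; apply N; exists (- z); repeat split; auto; lra.
    - destruct (classic (exists y, x <= y <= 1 /\ f y = y /\ y < f b))
        as [[y [Hy1 [Hy2 Hy3]]]|N].
      + pose proof (HE y Hy1 Hy2).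
        pose proof (homeo_le f Hf b y ltac:(lra) ltac:(lra) ltac:(lra)). lra.
      + assert (m <= - f b); [|unfold b in *; lra]. apply Hlub. intros z [Hz1 Hz2].
        destruct (Rle_dec z (- f b)); auto.
        exfalso; apply N; exists (- z); repeat split; auto; lra. }
  exists b; repeat split; auto. intros y Hy Hfy. pose proof (HE y ltac:(lra) Hfy). lra.
Qed.

Lemma component_of_moved f (Hf : homeo_plus f) x : 0 <= x <= 1 -> f x <> x ->
  exists a b, succ_fix f a b /\ a < x < b.
Proof.
  intros Hx Hn.
  destruct (last_fixed_left f Hf x Hx) as [a [Ha [Hfa Hla]]].
  destruct (first_fixed_right f Hf x Hx) as [b [Hb [Hfb Hrb]]].
  assert (a <> x) by (intro; subst; auto). assert (b <> x) by (intro; subst; auto).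
  exists a, b; split; [|lra].
  unfold succ_fix; repeat split; try lra; auto.
  intros y Hy. destruct (Rle_dec y x); [apply Hla | apply Hrb]; lra.
Qed.

Lemma component_inside f a b c d : succ_fix f a b -> 0 <= c -> d <= 1 ->
  f c = c -> f d = d -> forall x, a < x < b -> c < x < d -> c <= a /\ b <= d.
Proof.
  intros [_ [_ [_ [_ [_ Hn]]]]] H0 H1 Fc Fd x Hx Hxcd. split.
  - destruct (Rle_dec c a); auto. exfalso; apply (Hn c); auto; lra.
  - destruct (Rle_dec b d); auto. exfalso; apply (Hn d); auto; lra.
Qed.

Lemma homeo_agree_right f g (Hf : homeo_plus f) (Hg : homeo_plus g) x eta :
  0 <= x < 1 -> eta > 0 -> (forall y, x < y < x + eta -> f y = g y) -> f x = g x.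
Proof.
  intros Hx He Hag.
  assert (key : forall f g, homeo_plus f -> homeo_plus g ->
            (forall y, x < y < x + eta -> f y = g y) -> ~ f x > g x).
  { clear f g Hf Hg Hag. intros f g Hf Hg Hag H.
    destruct (homeo_cont_right g Hg x ltac:(lra) (f x - g x) ltac:(lra)) as [d [Hd Hc]].
    set (m := Rmin (Rmin d eta) (1 - x)).
    assert (Hm1 : m <= d) by (eapply Rle_trans; apply Rmin_l).
    assert (Hm2 : m <= eta) by (eapply Rle_trans; [apply Rmin_l | apply Rmin_r]).
    assert (Hm3 : m <= 1 - x) by apply Rmin_r.
    assert (Hm4 : 0 < m) by (unfold m; repeat apply Rmin_case; lra).
    pose proof (Hc (x + m / 2) ltac:(lra) ltac:(lra)).
    pose proof (homeo_le f Hf x (x + m / 2) ltac:(lra) ltac:(lra) ltac:(lra)).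
    rewrite (Hag (x + m / 2) ltac:(lra)) in H1. lra. }
  destruct (Rtotal_order (f x) (g x)) as [h|[h|h]]; auto; exfalso.
  - apply (key g f Hg Hf); [intros; symmetry; auto | lra].
  - apply (key f g Hf Hg); auto.
Qed.

Lemma homeo_agree_left f g (Hf : homeo_plus f) (Hg : homeo_plus g) x eta :
  0 < x <= 1 -> eta > 0 -> (forall y, x - eta < y < x -> f y = g y) -> f x = g x.
Proof.
  intros Hx He Hag.
  assert (key : forall f g, homeo_plus f -> homeo_plus g ->
            (forall y, x - eta < y < x -> f y = g y) -> ~ f x < g x).
  { clear f g Hf Hg Hag. intros f g Hf Hg Hag H.
    destruct (homeo_cont_left g Hg x ltac:(lra) (g x - f x) ltac:(lra)) as [d [Hd Hc]].
    set (m := Rmin (Rmin d eta) x).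
    assert (Hm1 : m <= d) by (eapply Rle_trans; apply Rmin_l).
    assert (Hm2 : m <= eta) by (eapply Rle_trans; [apply Rmin_l | apply Rmin_r]).
    assert (Hm3 : m <= x) by apply Rmin_r.
    assert (Hm4 : 0 < m) by (unfold m; repeat apply Rmin_case; lra).
    pose proof (Hc (x - m / 2) ltac:(lra) ltac:(lra)).
    pose proof (homeo_le f Hf (x - m / 2) x ltac:(lra) ltac:(lra) ltac:(lra)).
    rewrite (Hag (x - m / 2) ltac:(lra)) in H1. lra. }
  destruct (Rtotal_order (f x) (g x)) as [h|[h|h]]; auto; exfalso.
  - apply (key f g Hf Hg); auto.
  - apply (key g f Hg Hf); [intros; symmetry; auto | lra].
Qed.

Lemma preimage_subinterval rho rho' (Hr : homeo_plus rho) (Hi : inverse rho rho') u2 w2 u1 w1 :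
  0 <= u2 -> u2 < w2 -> w2 <= 1 -> rho u2 <= u1 -> u1 < w1 -> w1 <= rho w2 ->
  u2 <= rho' u1 /\ rho' u1 < rho' w1 /\ rho' w1 <= w2 /\
  forall z, rho' u1 < z < rho' w1 -> u2 < z < w2 /\ u1 < rho z < w1.
Proof.
  intros H1 H2 H3 H4 H5 H6.
  pose proof (homeo_inverse rho rho' Hr Hi) as Hr'.
  pose proof (homeo_range rho Hr u2 ltac:(lra)). pose proof (homeo_range rho Hr w2 ltac:(lra)).
  pose proof (homeo_range rho' Hr' u1 ltac:(lra)). pose proof (homeo_range rho' Hr' w1 ltac:(lra)).
  assert (A1 : u2 <= rho' u1)
    by (apply (homeo_le_rev rho Hr); try lra; rewrite (proj2 (Hi u1)); lra).
  assert (A2 : rho' u1 < rho' w1) by (apply (homeo_mono rho' Hr'); lra).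
  assert (A3 : rho' w1 <= w2)
    by (apply (homeo_le_rev rho Hr); try lra; rewrite (proj2 (Hi w1)); lra).
  repeat split; auto; try lra.
  - rewrite <- (proj2 (Hi u1)). apply (homeo_mono rho Hr); lra.
  - rewrite <- (proj2 (Hi w1)). apply (homeo_mono rho Hr); lra.
Qed.

(* On the closure of a component of [0,1] \ Fix(g), a map induced by g is
   either g or the identity: a switch inside the component would produce a
   fixed point of g there, by continuity. *)
Lemma induced_on_component g h (Hg : homeo_plus g) (Hi : induced g h) e e' :
  succ_fix g e e' ->
  (forall z, e <= z <= e' -> h z = g z) \/ (forall z, e <= z <= e' -> h z = z).
Proof.
  intros Hs. destruct Hi as [Hh Hi].
  destruct Hs as [He0 [Hee [He1 [Hge [Hge' Hgn]]]]].
  destruct (classic (forall z, e <= z <= e' -> h z = g z)) as [A|A]; [left; auto | right].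
  intros z Hz. destruct (classic (h z = z)) as [B|B]; auto. exfalso.
  destruct (Hi z ltac:(lra)) as [C|C]; [contradiction|].
  apply not_all_ex_not in A. destruct A as [z1 A].
  apply imply_to_and in A. destruct A as [Hz1 A].
  destruct (Hi z1 ltac:(lra)) as [D|D]; [|contradiction].
  assert (Hz1i : e < z1 < e').
  { split; apply Rnot_le_lt; intro; assert (z1 = e \/ z1 = e') as [->| ->] by lra;
      apply A; rewrite D; auto. }
  assert (Hzi : e < z < e').
  { split; apply Rnot_le_lt; intro; assert (z = e \/ z = e') as [->| ->] by lra;
      apply B; rewrite C; auto. }
  destruct (component_of_moved h Hh z ltac:(lra) B)
    as [a [b [[Ha0 [Hab [Hb1 [Hha [Hhb Hhn]]]]] Hx]]].
  destruct (Rtotal_order z1 z) as [L|[L|L]]; [| subst; contradiction |].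
  - (* h is fixed at z1 < z and equals g on (a, z): then g a = h a = a *)
    assert (z1 <= a) by (destruct (Rle_dec z1 a); auto; exfalso; apply (Hhn z1); auto; lra).
    assert (h a = g a).
    { apply (homeo_agree_right h g Hh Hg a (z - a)); try lra.
      intros y Hy. destruct (Hi y ltac:(lra)) as [F|F]; auto.
      exfalso; apply (Hhn y); auto; lra. }
    apply (Hgn a); lra.
  - assert (b <= z1) by (destruct (Rle_dec b z1); auto; exfalso; apply (Hhn z1); auto; lra).
    assert (h b = g b).
    { apply (homeo_agree_left h g Hh Hg b (b - z)); try lra.
      intros y Hy. destruct (Hi y ltac:(lra)) as [F|F]; auto.
      exfalso; apply (Hhn y); auto; lra. }
    apply (Hgn b); lra.
Qed.

Lemma induced_locally g h (Hg : homeo_plus g) (Hi : induced g h) u w :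
  0 <= u -> u < w -> w <= 1 ->
  exists u1 w1, u <= u1 /\ u1 < w1 /\ w1 <= w /\
    ((forall z, u1 < z < w1 -> h z = g z) \/ (forall z, u1 < z < w1 -> h z = z)).
Proof.
  intros H1 H2 H3.
  destruct (classic (exists z, u < z < w /\ g z <> z)) as [[z [Hz Nz]]|N].
  - destruct (component_of_moved g Hg z ltac:(lra) Nz) as [e [e' [Se Hze]]].
    pose proof Se as [Se0 [See [Se1 _]]].
    assert (Hm1 : u <= Rmax u e) by apply Rmax_l. assert (Hm2 : e <= Rmax u e) by apply Rmax_r.
    assert (Hm3 : Rmin w e' <= w) by apply Rmin_l. assert (Hm4 : Rmin w e' <= e') by apply Rmin_r.
    assert (Hm5 : Rmax u e < Rmin w e') by (apply Rmax_case; apply Rmin_case; lra).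
    exists (Rmax u e), (Rmin w e'). repeat split; auto.
    destruct (induced_on_component g h Hg Hi e e' Se) as [A|A]; [left | right];
      intros; apply A; lra.
  - exists u, w. repeat split; try lra. left. intros z Hz.
    destruct (proj2 Hi z ltac:(lra)) as [E|E]; auto. rewrite E.
    destruct (classic (g z = z)); auto. exfalso; apply N; exists z; auto.
Qed.

Lemma induced_inverse g g' h h' : inverse g g' -> induced g h -> inverse h h' -> induced g' h'.
Proof.
  intros Ig [Hh Hi] Ih. split; [apply (homeo_inverse h h' Hh Ih)|].
  intros y Hy. pose proof (homeo_range h' (homeo_inverse h h' Hh Ih) y Hy) as Hx.
  destruct (Hi (h' y) Hx) as [E|E]; rewrite (proj2 (Ih y)) in E.
  - left; auto.
  - right. rewrite E at 2. rewrite (proj1 (Ig (h' y))). auto.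
Qed.

Lemma sfp_bounds (G : (R -> R) -> Prop) c d : sfp G c d -> 0 <= c /\ c < d /\ d <= 1.
Proof. intros [g [_ [A [B [C _]]]]]. auto. Qed.

Lemma linked_inside a b c d : a < c < b -> ~ (a < d < b) -> linked a b c d.
Proof. intros H1 H2. left; left. unfold in_open; split; auto; lra. Qed.
Lemma linked_outside a b c d : ~ (a < c < b) -> a < d < b -> linked a b c d.
Proof. intros H1 H2. left; right. unfold in_open; split; auto; lra. Qed.

Section UnlinkedGroup.

Variable G : (R -> R) -> Prop.
Hypothesis HG : is_group G.
Hypothesis HL : without_linked G.

Lemma grp_homeo g : G g -> homeo_plus g.
Proof. destruct HG as [H _]; auto. Qed.
Lemma grp_id : G (fun x => x).
Proof. destruct HG as [_ [H _]]; auto. Qed.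
Lemma grp_comp g h : G g -> G h -> G (comp g h).
Proof. destruct HG as [_ [_ [H _]]]; auto. Qed.
Lemma grp_inv g : G g -> exists g', G g' /\ inverse g g'.
Proof.
  destruct HG as [_ [_ [_ H]]]. intros Hg. destruct (H g Hg) as [g' [A B]].
  exists g'; split; auto.
Qed.

Definition fixpairs_in (w : R -> R) : Prop :=
  forall r s, succ_fix w r s -> sfp G r s.

Lemma fixpairs_in_group g : G g -> fixpairs_in g.
Proof. intros Hg r s Hs. exists g; auto. Qed.

(* Absence of linking: a map whose fixed pairs are those of G and which fixes
   a point of a component (c,d) of G also fixes c and d, since otherwise a
   component of the map would be linked with {c,d}. *)
Lemma ends_fixed w (Hw : homeo_plus w) (Lw : fixpairs_in w) c d (Hcd : sfp G c d) p :
  c < p < d -> w p = p -> w c = c /\ w d = d.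
Proof.
  intros Hp Hwp. pose proof (sfp_bounds G c d Hcd) as Hb. split.
  - destruct (classic (w c = c)) as [A|A]; auto. exfalso.
    destruct (component_of_moved w Hw c ltac:(lra) A) as [r [s [Hs Hrs]]].
    pose proof Hs as [_ [_ [_ [_ [_ Hn]]]]].
    assert (s <= p) by (destruct (Rle_dec s p); auto; exfalso; apply (Hn p); auto; lra).
    apply (HL r s c d (Lw r s Hs) Hcd). apply linked_inside; lra.
  - destruct (classic (w d = d)) as [A|A]; auto. exfalso.
    destruct (component_of_moved w Hw d ltac:(lra) A) as [r [s [Hs Hrs]]].
    pose proof Hs as [_ [_ [_ [_ [_ Hn]]]]].
    assert (p <= r) by (destruct (Rle_dec p r); auto; exfalso; apply (Hn p); auto; lra).
    apply (HL r s c d (Lw r s Hs) Hcd). apply linked_outside; lra.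
Qed.

(* Two such maps, the second fixing c and d, each with a fixed point in
   (c,d), have a common fixed point in (c,d): otherwise the component of
   the second map around a fixed point of the first would be linked with a
   component of the first map or with {c,d}. *)
Lemma common_fixed_point k1 k2 (H1 : homeo_plus k1) (H2 : homeo_plus k2)
  (L1 : fixpairs_in k1) (L2 : fixpairs_in k2) c d (Hcd : sfp G c d) :
  k2 c = c -> k2 d = d ->
  (exists p, c < p < d /\ k1 p = p) -> (exists p, c < p < d /\ k2 p = p) ->
  exists p, c < p < d /\ k1 p = p /\ k2 p = p.
Proof.
  intros Hc Hd [p1 [Hp1 E1]] [p2 [Hp2 E2]].
  pose proof (sfp_bounds G c d Hcd) as Hb.
  destruct (classic (k2 p1 = p1)) as [A|A]; [exists p1; auto|].
  destruct (component_of_moved k2 H2 p1 ltac:(lra) A) as [e [e' [Hs He]]].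
  pose proof Hs as [He0 [Hee [He1 [Hfe [Hfe' Hn]]]]].
  destruct (component_inside k2 e e' c d Hs ltac:(lra) ltac:(lra) Hc Hd p1 He Hp1).
  assert (c < e).
  { destruct (Rle_lt_or_eq_dec c e ltac:(lra)) as [h|h]; auto. exfalso. subst e.
    destruct (Rle_lt_or_eq_dec e' d ltac:(lra)) as [h|h].
    - apply (HL c d c e' Hcd (L2 c e' Hs)). apply linked_outside; lra.
    - subst e'. apply (Hn p2); auto. }
  destruct (classic (k1 e = e)) as [B|B]; [exists e; repeat split; auto; lra|].
  exfalso.
  destruct (component_of_moved k1 H1 e ltac:(lra) B) as [r [s [Hs' Hrs]]].
  pose proof Hs' as [_ [_ [_ [_ [_ Hn']]]]].
  assert (s <= p1) by (destruct (Rle_dec s p1); auto; exfalso; apply (Hn' p1); auto; lra).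
  apply (HL r s e e' (L1 r s Hs') (L2 e e' Hs)). apply linked_inside; lra.
Qed.

(* The kernel of the relative translation number at {c,d}: elements of G
   fixing c and d together with some point of (c,d). *)
Definition kernel_at (c d : R) (k : R -> R) : Prop :=
  G k /\ k c = c /\ k d = d /\ exists p, c < p < d /\ k p = p.

Lemma kernel_id c d : c < d -> kernel_at c d (fun x => x).
Proof.
  intros H. split; [apply grp_id|]. repeat split; auto.
  exists ((c + d) / 2); split; auto; lra.
Qed.

Lemma kernel_comp c d (Hcd : sfp G c d) k1 k2 :
  kernel_at c d k1 -> kernel_at c d k2 -> kernel_at c d (comp k1 k2).
Proof.
  intros [G1 [c1 [d1 P1]]] [G2 [c2 [d2 P2]]].
  destruct (common_fixed_point k1 k2 (grp_homeo k1 G1) (grp_homeo k2 G2)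
    (fixpairs_in_group k1 G1) (fixpairs_in_group k2 G2) c d Hcd c2 d2 P1 P2)
    as [p [Hp [E1 E2]]].
  split; [apply grp_comp; auto|]. unfold comp. rewrite c2, d2, c1, d1. repeat split; auto.
  exists p; split; auto. rewrite E2; auto.
Qed.

Lemma kernel_inv c d k k' : kernel_at c d k -> G k' -> inverse k k' -> kernel_at c d k'.
Proof.
  intros [Gk [Hc [Hd [p [Hp Ep]]]]] Gk' Hi. split; auto.
  rewrite <- Hc at 1. rewrite (proj1 (Hi c)). rewrite <- Hd at 1. rewrite (proj1 (Hi d)).
  repeat split; auto. exists p; split; auto. rewrite <- Ep at 1. apply Hi.
Qed.

Lemma kernel_conj c d k g g' :
  sfp G c d -> kernel_at (g c) (g d) k -> G g -> G g' -> inverse g g' ->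
  kernel_at c d (comp g' (comp k g)).
Proof.
  intros Hcd [Gk [Hc [Hd [p [Hp Ep]]]]] Gg Gg' Hi.
  pose proof (sfp_bounds G c d Hcd).
  pose proof (grp_homeo g Gg) as Hg. pose proof (grp_homeo g' Gg') as Hg'.
  split; [apply grp_comp; auto; apply grp_comp; auto|]. unfold comp.
  rewrite Hc, Hd, (proj1 (Hi c)), (proj1 (Hi d)).
  repeat split; auto. exists (g' p). split.
  - pose proof (homeo_range g Hg c ltac:(lra)). pose proof (homeo_range g Hg d ltac:(lra)).
    split; apply (homeo_lt_rev g Hg); try (apply (homeo_range g' Hg'); lra); try lra;
      rewrite (proj2 (Hi p)); lra.
  - rewrite (proj2 (Hi p)), Ep; auto.
Qed.

Lemma kernel_local c d (Hcd : sfp G c d) g k u w :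
  G g -> kernel_at c d k -> c <= u -> u < w -> w <= d ->
  (forall z, u < z < w -> g z = k z) -> kernel_at c d g.
Proof.
  intros Gg Kk H1 H2 H3 E.
  destruct (grp_inv k (proj1 Kk)) as [k' [Gk' Ik]].
  set (v := comp k' g).
  assert (Gv : G v) by (apply grp_comp; auto).
  assert (Vz : v ((u + w) / 2) = (u + w) / 2).
  { unfold v, comp. rewrite E by lra. apply Ik. }
  destruct (ends_fixed v (grp_homeo v Gv) (fixpairs_in_group v Gv) c d Hcd ((u + w) / 2)
    ltac:(lra) Vz) as [Vc Vd].
  assert (Kv : kernel_at c d v).
  { split; auto. repeat split; auto. exists ((u + w) / 2); split; auto; lra. }
  replace g with (comp k v); [apply kernel_comp; auto|].
  apply functional_extensionality; intros x. unfold v, comp. apply Ik.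
Qed.

Lemma sfp_conj g g' c d : G g -> G g' -> inverse g g' -> sfp G c d -> sfp G (g c) (g d).
Proof.
  intros Gg Gg' Hi [u [Gu [Hc0 [Hcd [Hd1 [Huc [Hud Hn]]]]]]].
  pose proof (grp_homeo g Gg) as Hg. pose proof (grp_homeo g' Gg') as Hg'.
  pose proof (homeo_range g Hg c ltac:(lra)). pose proof (homeo_range g Hg d ltac:(lra)).
  exists (comp g (comp u g')). split; [apply grp_comp; auto; apply grp_comp; auto|].
  unfold comp. repeat split; try lra.
  - apply (homeo_mono g Hg); lra.
  - rewrite (proj1 (Hi c)), Huc; auto.
  - rewrite (proj1 (Hi d)), Hud; auto.
  - intros x Hx E.
    assert (c < g' x < d).
    { split; apply (homeo_lt_rev g Hg); try (apply (homeo_range g' Hg'); lra); try lra;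
        rewrite (proj2 (Hi x)); lra. }
    apply (Hn (g' x)); auto.
    rewrite <- (proj1 (Hi (u (g' x)))). rewrite E. reflexivity.
Qed.

Definition pointwise_in (f : R -> R) : Prop :=
  forall x, 0 <= x <= 1 -> exists g, G g /\ f x = g x.

Definition locally_in (f : R -> R) : Prop :=
  forall u w, 0 <= u -> u < w -> w <= 1 -> exists u' w' g,
    u <= u' /\ u' < w' /\ w' <= w /\ G g /\ forall z, u' < z < w' -> f z = g z.

Definition locally_kernel (f g : R -> R) (c d : R) : Prop :=
  forall u w, c <= u -> u < w -> w <= d -> exists u' w' k,
    u <= u' /\ u' < w' /\ w' <= w /\ kernel_at c d k /\ forall z, u' < z < w' -> f z = g (k z).

Definition compatible (f : R -> R) : Prop :=
  forall c d, sfp G c d -> forall x, c < x < d -> exists g,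
    G g /\ g x = f x /\ g c = f c /\ g d = f d /\ locally_kernel f g c d.

Definition tame (f : R -> R) : Prop :=
  homeo_plus f /\ pointwise_in f /\ locally_in f /\ compatible f.

Lemma tame_group_elem g : G g -> tame g.
Proof.
  intros Gg. split; [apply grp_homeo; auto|]. split; [|split].
  - intros x _. exists g; auto.
  - intros u w H1 H2 H3. exists u, w, g. repeat split; auto; lra.
  - intros c d Hcd x Hx. exists g. repeat split; auto.
    intros u w H1 H2 H3. exists u, w, (fun x => x).
    split; [lra|]. split; [lra|]. split; [lra|]. split; auto.
    apply kernel_id. pose proof (sfp_bounds G c d Hcd); lra.
Qed.

Lemma locally_kernel_shift c d (Hcd : sfp G c d) f g :
  locally_kernel f (fun x => x) c d -> kernel_at c d g -> locally_kernel f g c d.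
Proof.
  intros Hcl Kg u w H1 H2 H3.
  destruct (Hcl u w H1 H2 H3) as [u' [w' [k [A1 [A2 [A3 [Kk E]]]]]]].
  destruct (grp_inv g (proj1 Kg)) as [g' [Gg' Hi]].
  exists u', w', (comp g' k). split; [lra|]. split; [lra|]. split; [lra|]. split.
  - apply kernel_comp; auto. apply (kernel_inv c d g); auto.
  - intros z Hz. unfold comp. rewrite (proj2 (Hi (k z))). auto.
Qed.

Lemma pointwise_comp f1 f2 : homeo_plus f2 ->
  pointwise_in f1 -> pointwise_in f2 -> pointwise_in (comp f1 f2).
Proof.
  intros Hf2 O1 O2 x Hx. destruct (O2 x Hx) as [g2 [Gg2 E2]].
  destruct (O1 (f2 x) (homeo_range f2 Hf2 x Hx)) as [g1 [Gg1 E1]].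
  exists (comp g1 g2); split; [apply grp_comp; auto|]. unfold comp. rewrite E1, E2; auto.
Qed.

Lemma locally_in_comp f1 f2 : locally_in f1 -> locally_in f2 -> locally_in (comp f1 f2).
Proof.
  intros Z1 Z2 u w H1 H2 H3.
  destruct (Z2 u w H1 H2 H3) as [u2 [w2 [g2 [A1 [A2 [A3 [Gg2 E2]]]]]]].
  pose proof (grp_homeo g2 Gg2) as Hg2.
  destruct (grp_inv g2 Gg2) as [g2' [Gg2' Hi2]].
  pose proof (homeo_mono g2 Hg2 u2 w2 ltac:(lra) A2 ltac:(lra)).
  pose proof (homeo_range g2 Hg2 u2 ltac:(lra)). pose proof (homeo_range g2 Hg2 w2 ltac:(lra)).
  destruct (Z1 (g2 u2) (g2 w2) ltac:(lra) ltac:(lra) ltac:(lra))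
    as [u1 [w1 [g1 [B1 [B2 [B3 [Gg1 E1]]]]]]].
  destruct (preimage_subinterval g2 g2' Hg2 Hi2 u2 w2 u1 w1 ltac:(lra) A2 ltac:(lra) B1 B2 B3)
    as [C1 [C2 [C3 C4]]].
  exists (g2' u1), (g2' w1), (comp g1 g2). repeat split; try lra.
  - apply grp_comp; auto.
  - intros z Hz. destruct (C4 z Hz) as [D1 D2]. unfold comp. rewrite E2 by lra. apply E1; lra.
Qed.

Lemma locally_kernel_comp c d (Hcd : sfp G c d) f1 f2 g1 g2 : G g2 ->
  locally_kernel f2 g2 c d -> locally_kernel f1 g1 (g2 c) (g2 d) ->
  locally_kernel (comp f1 f2) (comp g1 g2) c d.
Proof.
  intros Gg2 CL2 CL1 u w H1 H2 H3.
  pose proof (sfp_bounds G c d Hcd) as Bcd.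
  pose proof (grp_homeo g2 Gg2) as Hg2.
  destruct (grp_inv g2 Gg2) as [g2' [Gg2' Hi2]].
  destruct (CL2 u w H1 H2 H3) as [u2 [w2 [k2 [A1 [A2 [A3 [Kk2 E2]]]]]]].
  pose proof Kk2 as [Gk2 [Hk2c [Hk2d _]]].
  pose proof (grp_homeo k2 Gk2) as Hk2.
  destruct (grp_inv k2 Gk2) as [k2' [Gk2' Hik2]].
  set (rho := comp g2 k2).
  assert (Hrho : homeo_plus rho) by (apply homeo_comp; auto).
  assert (Hirho : inverse rho (comp k2' g2')) by (apply inverse_comp; auto).
  assert (R1 : g2 c <= rho u2).
  { unfold rho, comp. assert (c <= k2 u2) by (rewrite <- Hk2c at 1; apply (homeo_le k2 Hk2); lra).
    pose proof (homeo_range k2 Hk2 u2 ltac:(lra)). apply (homeo_le g2 Hg2); lra. }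
  assert (R2 : rho w2 <= g2 d).
  { unfold rho, comp. assert (k2 w2 <= d) by (rewrite <- Hk2d; apply (homeo_le k2 Hk2); lra).
    pose proof (homeo_range k2 Hk2 w2 ltac:(lra)). apply (homeo_le g2 Hg2); lra. }
  assert (R3 : rho u2 < rho w2) by (apply (homeo_mono rho Hrho); lra).
  destruct (CL1 (rho u2) (rho w2) R1 R3 R2) as [u1 [w1 [k1 [B1 [B2 [B3 [Kk1 E1]]]]]]].
  destruct (preimage_subinterval rho _ Hrho Hirho u2 w2 u1 w1 ltac:(lra) A2 ltac:(lra) B1 B2 B3)
    as [C1 [C2 [C3 C4]]].
  exists (comp k2' g2' u1), (comp k2' g2' w1), (comp (comp g2' (comp k1 g2)) k2).
  split; [lra|]. split; [lra|]. split; [lra|]. split.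
  - apply kernel_comp; auto. apply kernel_conj; auto.
  - intros z Hz. destruct (C4 z Hz) as [D1 D2]. unfold comp.
    rewrite (proj2 (Hi2 (k1 (g2 (k2 z))))), E2 by lra. apply E1. exact D2.
Qed.

Lemma compatible_comp f1 f2 : homeo_plus f2 ->
  compatible f1 -> compatible f2 -> compatible (comp f1 f2).
Proof.
  intros Hf2 T1 T2 c d Hcd x Hx.
  pose proof (sfp_bounds G c d Hcd) as Bcd.
  destruct (T2 c d Hcd x Hx) as [g2 [Gg2 [Ex2 [Ec2 [Ed2 CL2]]]]].
  pose proof (grp_homeo g2 Gg2) as Hg2.
  destruct (grp_inv g2 Gg2) as [g2' [Gg2' Hi2]].
  assert (Hx' : g2 c < f2 x < g2 d) by (rewrite <- Ex2; split; apply (homeo_mono g2 Hg2); lra).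
  destruct (T1 (g2 c) (g2 d) (sfp_conj g2 g2' c d Gg2 Gg2' Hi2 Hcd) (f2 x) Hx')
    as [g1 [Gg1 [Ex1 [Ec1 [Ed1 CL1]]]]].
  exists (comp g1 g2). split; [apply grp_comp; auto|]. unfold comp.
  rewrite Ex2, Ex1, Ec2, Ed2, <- Ec2, <- Ed2, Ec1, Ed1. repeat split; auto.
  apply locally_kernel_comp; auto.
Qed.

Lemma tame_comp f1 f2 : tame f1 -> tame f2 -> tame (comp f1 f2).
Proof.
  intros [Hf1 [O1 [Z1 T1]]] [Hf2 [O2 [Z2 T2]]].
  split; [apply homeo_comp; auto|]. split; [|split].
  - apply pointwise_comp; auto.
  - apply locally_in_comp; auto.
  - apply compatible_comp; auto.
Qed.

(* If a tame map f coincides with gam on a subinterval of a component (c,d)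
   of gam, then f fixes c and d: relative to a compatible g1, f is locally
   g1 o k there, so gam^-1 o g1 o k is an element of G with a fixed point in
   (c,d), hence fixes c and d. *)
Lemma tame_fixes_ends f gam c d u w : tame f -> G gam -> succ_fix gam c d ->
  c <= u -> u < w -> w <= d -> (forall z, u < z < w -> f z = gam z) ->
  f c = c /\ f d = d.
Proof.
  intros [_ [_ [_ T]]] Gg Sg H1 H2 H3 Eg.
  pose proof Sg as [_ [_ [_ [Sgc [Sgd _]]]]].
  assert (Hcd : sfp G c d) by (exists gam; auto).
  destruct (T c d Hcd ((u + w) / 2) ltac:(lra)) as [g1 [Gg1 [_ [Ec1 [Ed1 CL1]]]]].
  destruct (CL1 u w H1 H2 H3) as [u2 [w2 [k [B1 [B2 [B3 [[Gk [Kc [Kd _]]] E]]]]]]].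
  destruct (grp_inv gam Gg) as [gam' [Gg' Hi]].
  set (v := comp gam' (comp g1 k)).
  assert (Gv : G v) by (apply grp_comp; auto; apply grp_comp; auto).
  assert (Vz : v ((u2 + w2) / 2) = (u2 + w2) / 2).
  { unfold v, comp. rewrite <- E, Eg by lra. apply Hi. }
  destruct (ends_fixed v (grp_homeo v Gv) (fixpairs_in_group v Gv) c d Hcd ((u2 + w2) / 2)
    ltac:(lra) Vz) as [Vc Vd].
  unfold v, comp in Vc, Vd. rewrite Kc in Vc. rewrite Kd in Vd.
  rewrite <- Ec1, <- Ed1, <- (proj2 (Hi (g1 c))), <- (proj2 (Hi (g1 d))), Vc, Vd. auto.
Qed.

(* Such an f cannot moreover fix a point q of (c,d): relative to a compatible
   element at q, which is in the kernel, gam would be locally in the kernel,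
   hence in the kernel, contradicting that gam moves every point of (c,d). *)
Lemma tame_no_fixed_point f gam c d u w : tame f -> G gam -> succ_fix gam c d ->
  c <= u -> u < w -> w <= d -> (forall z, u < z < w -> f z = gam z) ->
  f c = c -> f d = d -> forall q, c < q < d -> f q <> q.
Proof.
  intros [_ [_ [_ T]]] Gg Sg H1 H2 H3 E Fc Fd q Hq Fq.
  assert (Hcd : sfp G c d) by (exists gam; auto).
  destruct (T c d Hcd q Hq) as [ga [Gga [Eq [Ec [Ed CLa]]]]].
  assert (Ka : kernel_at c d ga) by (split; auto; repeat split; try congruence; exists q; split; congruence).
  destruct (CLa u w H1 H2 H3) as [u3 [w3 [k3 [A1 [A2 [A3 [K3 E3]]]]]]].
  assert (Kg : kernel_at c d gam).
  { apply (kernel_local c d Hcd gam (comp ga k3) u3 w3 Gg); try lra.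
    - apply kernel_comp; auto.
    - intros z Hz. unfold comp. rewrite <- E3, E by lra. auto. }
  destruct Kg as [_ [_ [_ [p [Hp Ep]]]]]. destruct Sg as [_ [_ [_ [_ [_ Sn]]]]].
  apply (Sn p); auto.
Qed.

(* Given a component (a,b) of a tame f, f agrees with some gam in G on a
   subinterval; the component (c,d) of gam there has fixed ends for f, so it
   contains (a,b), and it cannot be larger by the previous lemma. *)
Lemma tame_fixpairs f : tame f -> fixpairs_in f.
Proof.
  intros Tf a b Sab. pose proof Tf as [Hf [_ [Z _]]].
  pose proof Sab as [Ha0 [Hab [Hb1 [Fa [Fb Hn]]]]].
  destruct (Z a b Ha0 Hab Hb1) as [u' [w' [gam [A1 [A2 [A3 [Gg Eg]]]]]]].
  set (y := (u' + w') / 2).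
  assert (Hy : gam y <> y) by (unfold y; rewrite <- Eg by lra; apply Hn; lra).
  destruct (component_of_moved gam (grp_homeo gam Gg) y ltac:(unfold y; lra) Hy)
    as [c [d [Sg Hcy]]].
  pose proof Sg as [Sc0 [Scd [Sd1 _]]].
  assert (Hm1 : u' <= Rmax u' c) by apply Rmax_l. assert (Hm2 : c <= Rmax u' c) by apply Rmax_r.
  assert (Hm3 : Rmin w' d <= w') by apply Rmin_l. assert (Hm4 : Rmin w' d <= d) by apply Rmin_r.
  assert (Hm5 : Rmax u' c < Rmin w' d) by (apply Rmax_case; apply Rmin_case; unfold y in *; lra).
  assert (Eg' : forall z, Rmax u' c < z < Rmin w' d -> f z = gam z) by (intros; apply Eg; lra).
  destruct (tame_fixes_ends f gam c d _ _ Tf Gg Sg Hm2 Hm5 Hm4 Eg') as [Fc Fd].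
  destruct (component_inside f a b c d Sab Sc0 Sd1 Fc Fd y ltac:(unfold y; lra) Hcy).
  assert (c = a).
  { destruct (Rle_lt_or_eq_dec c a ltac:(lra)) as [h|h]; auto. exfalso.
    apply (tame_no_fixed_point f gam c d _ _ Tf Gg Sg Hm2 Hm5 Hm4 Eg' Fc Fd a); auto.
    unfold y in *; lra. }
  assert (d = b).
  { destruct (Rle_lt_or_eq_dec b d ltac:(lra)) as [h|h]; auto. exfalso.
    apply (tame_no_fixed_point f gam c d _ _ Tf Gg Sg Hm2 Hm5 Hm4 Eg' Fc Fd b); auto.
    unfold y in *; lra. }
  subst. exists gam; auto.
Qed.

Lemma induced_pointwise g h : pointwise_in g -> induced g h -> pointwise_in h.
Proof.
  intros Og [_ Hi] x Hx. destruct (Hi x Hx) as [E|E].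
  - exists (fun x => x); split; auto. apply grp_id.
  - destruct (Og x Hx) as [gam [Gg E2]]. exists gam; split; auto; congruence.
Qed.

Lemma induced_locally_in g h : homeo_plus g -> locally_in g -> induced g h -> locally_in h.
Proof.
  intros Hg Zg Hind u w H1 H2 H3.
  destruct (induced_locally g h Hg Hind u w H1 H2 H3) as [u1 [w1 [B1 [B2 [B3 [A|A]]]]]].
  - destruct (Zg u1 w1 ltac:(lra) B2 ltac:(lra)) as [u' [w' [gam [C1 [C2 [C3 [Gg E]]]]]]].
    exists u', w', gam. split; [lra|]. split; [lra|]. split; [lra|]. split; auto.
    intros z Hz. rewrite A by lra. auto.
  - exists u1, w1, (fun x => x). split; [lra|]. split; [lra|]. split; [lra|].
    split; [apply grp_id|]. intros z Hz. apply A; lra.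
Qed.

(* Two elements of G relative to which f is locally in the kernel at {c,d}
   differ by the kernel: if one of them is in the kernel, so is the other. *)
Lemma locally_kernel_witness c d (Hcd : sfp G c d) f g1 g2 : G g2 ->
  locally_kernel f g1 c d -> locally_kernel f g2 c d -> kernel_at c d g1 -> kernel_at c d g2.
Proof.
  intros Gg2 CL1 CL2 K1. pose proof (sfp_bounds G c d Hcd).
  destruct (CL2 c d ltac:(lra) ltac:(lra) ltac:(lra)) as [u1 [w1 [k1 [A1 [A2 [A3 [Kk1 E1]]]]]]].
  destruct (CL1 u1 w1 ltac:(lra) A2 ltac:(lra)) as [u2 [w2 [k2 [B1 [B2 [B3 [Kk2 E2]]]]]]].
  assert (K21 : kernel_at c d (comp g2 k1)).
  { apply (kernel_local c d Hcd _ (comp g1 k2) u2 w2); try lra.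
    - apply grp_comp; auto. apply Kk1.
    - apply kernel_comp; auto.
    - intros z Hz. unfold comp. rewrite <- E1, <- E2 by lra. auto. }
  destruct (grp_inv k1 (proj1 Kk1)) as [k1' [Gk1' Ik1]].
  replace g2 with (comp (comp g2 k1) k1').
  - apply kernel_comp; auto. apply (kernel_inv c d k1); auto.
  - apply functional_extensionality; intros x. unfold comp. rewrite (proj2 (Ik1 x)). auto.
Qed.

Lemma induced_locally_kernel c d (Hcd : sfp G c d) g g0 h : homeo_plus g -> induced g h ->
  locally_kernel g g0 c d -> kernel_at c d g0 -> locally_kernel h (fun x => x) c d.
Proof.
  intros Hg Hind CL K0 u w H1 H2 H3. pose proof (sfp_bounds G c d Hcd).
  destruct (induced_locally g h Hg Hind u w ltac:(lra) H2 ltac:(lra))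
    as [u1 [w1 [B1 [B2 [B3 [A|A]]]]]].
  - destruct (CL u1 w1 ltac:(lra) B2 ltac:(lra)) as [u' [w' [k [C1 [C2 [C3 [Kk E]]]]]]].
    exists u', w', (comp g0 k). split; [lra|]. split; [lra|]. split; [lra|]. split.
    + apply kernel_comp; auto.
    + intros z Hz. rewrite A, E by lra. auto.
  - exists u1, w1, (fun x => x). split; [lra|]. split; [lra|]. split; [lra|]. split.
    + apply kernel_id; lra.
    + intros z Hz. apply A; lra.
Qed.

(* Compatibility of h at {c,d} when g fixes a point of (c,d): then g, h fix
   c and d, h is locally in the kernel, and a witness for g at a point moved
   by h is a kernel element, hence also a witness for h. *)
Lemma induced_compatible_fixing g h c d (Hcd : sfp G c d) : tame g -> induced g h ->
  forall q, c < q < d -> g q = q ->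
  forall x, c < x < d -> exists g1,
    G g1 /\ g1 x = h x /\ g1 c = h c /\ g1 d = h d /\ locally_kernel h g1 c d.
Proof.
  intros Tg Hind q Hq Eq x Hx. pose proof (sfp_bounds G c d Hcd) as Bcd.
  pose proof Tg as [Hg [_ [_ T]]]. pose proof Hind as [Hh Hi].
  destruct (ends_fixed g Hg (tame_fixpairs g Tg) c d Hcd q Hq Eq) as [Gc Gd].
  assert (Hc : h c = c) by (destruct (Hi c ltac:(lra)) as [E|E]; congruence).
  assert (Hd : h d = d) by (destruct (Hi d ltac:(lra)) as [E|E]; congruence).
  destruct (T c d Hcd q Hq) as [gq [Ggq [Eqq [Ecq [Edq CLq]]]]].
  assert (Kq : kernel_at c d gq)
    by (split; auto; repeat split; try congruence; exists q; split; congruence).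
  pose proof (induced_locally_kernel c d Hcd g gq h Hg Hind CLq Kq) as CLh.
  destruct (classic (h x = x)) as [E|E].
  { exists (fun x => x). split; [apply grp_id|]. repeat split; auto. }
  destruct (Hi x ltac:(lra)) as [E'|E']; [contradiction|].
  destruct (T c d Hcd x Hx) as [gx [Ggx [Exx [Ecx [Edx CLx]]]]].
  exists gx. repeat split; try congruence.
  apply locally_kernel_shift; auto.
  apply (locally_kernel_witness c d Hcd g gq gx); auto.
Qed.

(* Compatibility of h at {c,d} when g moves every point of (c,d): then
   [c,d] lies in the closure of a component of g, on which h is g or the
   identity. *)
Lemma induced_compatible_moving g h c d (Hcd : sfp G c d) :
  homeo_plus g -> compatible g -> induced g h ->
  (forall q, c < q < d -> g q <> q) ->
  forall x, c < x < d -> exists g1,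
    G g1 /\ g1 x = h x /\ g1 c = h c /\ g1 d = h d /\ locally_kernel h g1 c d.
Proof.
  intros Hg T Hind N x Hx. pose proof (sfp_bounds G c d Hcd) as Bcd.
  destruct (component_of_moved g Hg x ltac:(lra) (N x Hx)) as [e [e' [Se Hxe]]].
  pose proof Se as [Se0 [See [Se1 [Sge [Sge' Sgn]]]]].
  assert (e <= c) by (destruct (Rle_dec e c); auto; exfalso; apply (N e); auto; lra).
  assert (d <= e') by (destruct (Rle_dec d e'); auto; exfalso; apply (N e'); auto; lra).
  destruct (induced_on_component g h Hg Hind e e' Se) as [A|A].
  - destruct (T c d Hcd x Hx) as [gx [Ggx [Exx [Ecx [Edx CLx]]]]].
    exists gx. split; auto. rewrite !A by lra. repeat split; auto.
    intros u w H1 H2 H3. destruct (CLx u w H1 H2 H3) as [u' [w' [k [B1 [B2 [B3 [Kk E]]]]]]].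
    exists u', w', k. split; [lra|]. split; [lra|]. split; [lra|]. split; auto.
    intros z Hz. rewrite A by lra. auto.
  - exists (fun x => x). split; [apply grp_id|]. rewrite !A by lra. repeat split; auto.
    intros u w H1 H2 H3. exists u, w, (fun x => x).
    split; [lra|]. split; [lra|]. split; [lra|]. split; [apply kernel_id; lra|].
    intros z Hz. apply A; lra.
Qed.

Lemma induced_tame g h : tame g -> induced g h -> tame h.
Proof.
  intros Tg Hind. pose proof Tg as [Hg [Og [Zg T]]].
  split; [apply Hind|]. split; [|split].
  - apply (induced_pointwise g); auto.
  - apply (induced_locally_in g); auto.
  - intros c d Hcd.
    destruct (classic (exists q, c < q < d /\ g q = q)) as [[q [Hq Eq]]|N].
    + apply (induced_compatible_fixing g h c d Hcd Tg Hind q Hq Eq).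
    + apply (induced_compatible_moving g h c d Hcd Hg T Hind).
      intros q Hq Eq. apply N; exists q; auto.
Qed.

Definition tame_group (f : R -> R) : Prop := tame f /\ exists f', inverse f f' /\ tame f'.

Lemma tame_group_is_group : is_group tame_group.
Proof.
  pose proof (tame_group_elem _ grp_id) as Tid.
  split; [|split; [|split]].
  - intros g [[H _] _]; auto.
  - split; auto. exists (fun x => x). split; auto. intros x; auto.
  - intros g h [Tg [g' [Ig Tg']]] [Th [h' [Ih Th']]]. split; [apply tame_comp; auto|].
    exists (comp h' g'). split; [apply inverse_comp; auto | apply tame_comp; auto].
  - intros g [Tg [g' [Ig Tg']]]. exists g'.
    split; [split; auto; exists g; split; auto; apply inverse_sym; auto|].
    intros x; apply Ig.
Qed.

Lemma tame_group_contains g : G g -> tame_group g.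
Proof.
  intros Gg. split; [apply tame_group_elem; auto|].
  destruct (grp_inv g Gg) as [g' [Gg' Hi]]. exists g'; split; auto. apply tame_group_elem; auto.
Qed.

Lemma tame_group_induced g h : tame_group g -> induced g h -> tame_group h.
Proof.
  intros [Tg [g' [Ig Tg']]] Hind.
  split; [apply (induced_tame g h Tg Hind)|].
  destruct (homeo_has_inverse h (proj1 Hind)) as [h' Ih]. exists h'. split; auto.
  apply (induced_tame g' h' Tg'). apply (induced_inverse g g' h h'); auto.
Qed.

End UnlinkedGroup.

Lemma generated_group (S H0 : (R -> R) -> Prop) :
  is_group H0 -> (forall s, S s -> H0 s) -> is_group (generated S).
Proof.
  intros HG0 HS. split; [|split; [|split]].
  - intros g Hg. apply (grp_homeo H0 HG0). apply Hg; auto.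
  - intros H HH _. apply (grp_id H HH).
  - intros g h Hg Hh H HH HSH. apply (grp_comp H HH); [apply Hg | apply Hh]; auto.
  - intros g Hg. pose proof (grp_homeo H0 HG0 g (Hg H0 HG0 HS)) as Hgh.
    destruct (homeo_has_inverse g Hgh) as [g' Ig]. exists g'. split; [|intros x; apply Ig].
    (* g' is the inverse of g computed in any group containing S *)
    intros H HH HSH. destruct (grp_inv H HH g (Hg H HH HSH)) as [g'' [Hg'' Ig'']].
    replace g' with g''; auto. apply functional_extensionality. intros x.
    rewrite <- (proj2 (Ig x)) at 1. rewrite (proj1 (Ig'' (g' x))). auto.
Qed.

Section Iterates.

Variable G : (R -> R) -> Prop.
Hypothesis HG : is_group G.
Hypothesis HL : without_linked G.

Lemma iterate_tame n f : I_iter n G f -> tame_group G f.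
Proof.
  revert f; induction n; intros f Hf; simpl in Hf.
  - apply tame_group_contains; auto.
  - apply Hf; [apply tame_group_is_group; auto|].
    intros s [g [Ig Hs]]. apply (tame_group_induced G HG HL g); auto.
Qed.

Lemma iterate_group n : is_group (I_iter n G).
Proof.
  destruct n; simpl; auto. apply (generated_group _ (tame_group G)).
  - apply tame_group_is_group; auto.
  - intros s [g [Ig Hs]]. apply (tame_group_induced G HG HL g); auto.
    apply (iterate_tame n); auto.
Qed.

(* Every map is induced by itself, so the iterates increase. *)
Lemma iterate_succ n f : I_iter n G f -> I_iter (S n) G f.
Proof.
  intros Hf. simpl. intros H HH HS. apply HS. exists f. split; auto.
  split; [apply (grp_homeo _ (iterate_group n)); auto | auto].
Qed.

Lemma iterate_le n m f : I_iter n G f -> I_iter (n + m) G f.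
Proof.
  induction m; intros Hf.
  - rewrite Nat.add_0_r; auto.
  - rewrite Nat.add_succ_r. apply iterate_succ; auto.
Qed.

Lemma I_inf_group : is_group (I_inf G).
Proof.
  split; [|split; [|split]].
  - intros g [n Hg]. apply (grp_homeo _ (iterate_group n)); auto.
  - exists 0%nat. apply (grp_id G HG).
  - intros g h [n Hg] [m Hh]. exists (n + m)%nat. apply (grp_comp _ (iterate_group (n + m))).
    + apply iterate_le; auto.
    + rewrite Nat.add_comm. apply iterate_le; auto.
  - intros g [n Hg]. destruct (grp_inv _ (iterate_group n) g Hg) as [g' [Hg' Ig]].
    exists g'. split; [exists n; auto | intros x; apply Ig].
Qed.

End Iterates.

Lemma stab_fixes_ends f (Hf : homeo_plus f) a b : 0 <= a -> a <= b -> b <= 1 ->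
  stab_int a b f -> f a = a /\ f b = b.
Proof.
  intros H1 H2 H3 Hs.
  assert (Ra : a <= f a <= b) by (apply Hs; exists a; split; auto; lra).
  assert (Rb : a <= f b <= b) by (apply Hs; exists b; split; auto; lra).
  split.
  - destruct (proj1 (Hs a) ltac:(lra)) as [x [Hx E]].
    destruct (Rle_lt_or_eq_dec a x ltac:(lra)) as [h|h]; [|rewrite <- h in E; auto].
    pose proof (homeo_mono f Hf a x ltac:(lra) h ltac:(lra)). lra.
  - destruct (proj1 (Hs b) ltac:(lra)) as [x [Hx E]].
    destruct (Rle_lt_or_eq_dec x b ltac:(lra)) as [h|h]; [|rewrite h in E; auto].
    pose proof (homeo_mono f Hf x b ltac:(lra) h ltac:(lra)). lra.
Qed.

Lemma fixed_ends_stab f (Hf : homeo_plus f) a b : 0 <= a -> a <= b -> b <= 1 ->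
  f a = a -> f b = b -> stab_int a b f.
Proof.
  intros H1 H2 H3 Ea Eb y. split.
  - intros Hy. destruct (homeo_onto f Hf y ltac:(lra)) as [x [Hx E]]. exists x. split; auto.
    split; apply (homeo_le_rev f Hf); lra.
  - intros [x [Hx E]]. subst. split.
    + rewrite <- Ea at 1. apply (homeo_le f Hf); lra.
    + rewrite <- Eb. apply (homeo_le f Hf); lra.
Qed.

(* Relative translation numbers of I^oo(G) at a pair {a,b} of G take no new
   values on the stabilizer: near {a,b}, h is locally gam o k with gam in G
   and k in the kernel, so phi = gam o k is in G_[a,b] and phi^-1 o h has a
   fixed point in (a,b), whence tau h = tau phi. *)
Lemma translation_values G (HG : is_group G) (HL : without_linked G) a b
  (Hab : sfp G a b) tau (Htau : rel_transl (I_inf G) a b tau) h :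
  I_inf G h -> stab_int a b h -> exists phi, G phi /\ stab_int a b phi /\ tau phi = tau h.
Proof.
  intros [n Hh] Sh. destruct Htau as [Thom [Tker _]].
  pose proof (sfp_bounds G a b Hab) as Bab.
  pose proof (iterate_tame G HG HL n h Hh) as [[Hhh [_ [_ T]]] _].
  destruct (stab_fixes_ends h Hhh a b ltac:(lra) ltac:(lra) ltac:(lra) Sh) as [Ha Hb].
  destruct (T a b Hab ((a + b) / 2) ltac:(lra)) as [gam [Gg [_ [Ea [Eb CL]]]]].
  destruct (CL a b ltac:(lra) ltac:(lra) ltac:(lra))
    as [u [w [k [A1 [A2 [A3 [[Gk [Kc [Kd _]]] E]]]]]]].
  set (phi := comp gam k).
  assert (Gphi : G phi) by (apply (grp_comp G HG); auto).
  assert (Pa : phi a = a) by (unfold phi, comp; rewrite Kc, Ea; auto).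
  assert (Pb : phi b = b) by (unfold phi, comp; rewrite Kd, Eb; auto).
  destruct (grp_inv G HG phi Gphi) as [phi' [Gphi' Iphi]].
  assert (Iinf0 : forall g, G g -> I_inf G g) by (intros g Gg'; exists 0%nat; auto).
  set (psi := comp phi' h).
  assert (Ipsi : I_inf G psi) by (apply (grp_comp _ (I_inf_group G HG HL)); auto; exists n; auto).
  assert (Hpsi : homeo_plus psi) by (apply (grp_homeo _ (I_inf_group G HG HL)); auto).
  assert (Spsi : stab_int a b psi).
  { apply fixed_ends_stab; auto; try lra; unfold psi, comp;
      [rewrite Ha, <- Pa at 1 | rewrite Hb, <- Pb at 1]; apply Iphi. }
  assert (Sphi : stab_int a b phi)
    by (apply fixed_ends_stab; auto; try lra; apply (grp_homeo G HG); auto).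
  assert (T0 : tau psi = 0).
  { apply (Tker psi Ipsi Spsi). exists ((u + w) / 2). split; [lra|].
    unfold psi, comp. rewrite E by lra. apply Iphi. }
  assert (Hdec : comp phi psi = h).
  { apply functional_extensionality; intros x. unfold psi, comp. apply Iphi. }
  pose proof (Thom phi psi (Iinf0 phi Gphi) Sphi Ipsi Spsi) as Tsum.
  exists phi. split; [|split]; auto. rewrite Hdec in Tsum. lra.
Qed.

Lemma I_inf_minimal G H : complete H -> (forall g, G g -> H g) -> forall h, I_inf G h -> H h.
Proof.
  intros [HH [_ HHc]] HGH h [n Hh]. revert h Hh. induction n; intros h Hh; simpl in Hh; auto.
  apply Hh; auto. intros s [g [Ig Hs]]. apply (HHc g); auto.
Qed.

Theorem lemmal (G : (R -> R) -> Prop) (HG : is_group G) (HL : without_linked G) :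
  complete (I_inf G) /\
  (forall x y, 0 <= x <= 1 ->
     ((exists h, I_inf G h /\ h x = y) <-> (exists g, G g /\ g x = y))) /\
  (forall a b, sfp (I_inf G) a b -> sfp G a b) /\
  (forall a b, sfp G a b -> forall tau : (R -> R) -> R,
     rel_transl (I_inf G) a b tau ->
     forall y, (exists g, G g /\ stab_int a b g /\ tau g = y) <->
               (exists h, I_inf G h /\ stab_int a b h /\ tau h = y)) /\
  (forall H, complete H -> (forall g, G g -> H g) ->
     forall h, I_inf G h -> H h).
Proof.
  assert (Iinf0 : forall g, G g -> I_inf G g) by (intros g Gg; exists 0%nat; auto).
  assert (Pairs : forall a b, sfp (I_inf G) a b -> sfp G a b).
  { intros a b [f [[n Hf] Sf]].
    apply (tame_fixpairs G HG HL f); auto. apply (iterate_tame G HG HL n f Hf). }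
  split; [|split; [|split; [|split]]].
  - split; [apply I_inf_group; auto|]. split.
    + intros a b c d H1 H2. apply HL; apply Pairs; auto.
    + intros g h [n Hg] Hind. exists (S n). intros H HH HS. apply HS. exists g; auto.
  - intros x y Hx. split.
    + intros [h [[n Hh] E]]. destruct (iterate_tame G HG HL n h Hh) as [[_ [O _]] _].
      destruct (O x Hx) as [g [Gg Eg]]. exists g; split; auto; congruence.
    + intros [g [Gg E]]. exists g; auto.
  - exact Pairs.
  - intros a b Hab tau Htau y. split.
    + intros [g [Gg [Sg Tg]]]. exists g; auto.
    + intros [h [Hh [Sh Th]]].
      destruct (translation_values G HG HL a b Hab tau Htau h Hh Sh) as [phi [Gphi [Sphi Tphi]]].
      exists phi. split; [|split]; auto. congruence.
  - apply I_inf_minimal.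
Qed.
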